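(* Let $\hat\pi=(\hat\pi_h)_{h=1}^H$ be any chunking policy and $\sigma>0$. Then the smoothed policy $\hat\pi_\sigma$ is $\gamma_{\mathrm{TVC}}$-TVC with $\gamma_{\mathrm{TVC}}(u)=\dfrac{u\sqrt{2\tau_o-1}}{2\sigma}$, i.e. for all $h$ and all $o,o'\in\mathcal{O}$, $\mathrm{TV}(\hat\pi_{\sigma,h}(o),\hat\pi_{\sigma,h}(o'))\le \frac{\sqrt{2\tau_o-1}}{2\sigma}\,d_{\mathrm{traj}}(o,o')$.
   Context: Let $\mathcal{O}=(\mathbb{R}^{d_x})^{\tau_o}\times(\mathbb{R}^{d_u})^{\tau_o-1}$ be the space of observation chunks $o=(x_{1:\tau_o},u_{1:\tau_o-1})$, identified with a Euclidean space, and $\mathcal{A}$ a Polish space of composite actions. A chunking policy is a sequence of probability kernels $\hat\pi_h:\mathcal{O}\to\Delta(\mathcal{A})$, $h=1,\dots,H$. The smoothed policy $\hat\pi_\sigma$ has $\hat\pi_{\sigma,h}(o)$ equal to the law of $a\sim\hat\pi_h(\tilde o)$ where $\tilde o\sim\mathcal{N}(o,\sigma^2I)$. For $o,o'\in\mathcal{O}$, $d_{\mathrm{traj}}(o,o')=\max_k\|x_k-x'_k\|\vee\max_k\|u_k-u'_k\|$ (Euclidean norms). $\mathrm{TV}$ is total variation distance. *)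

From HB Require Import structures.
From mathcomp Require Import all_boot all_order all_algebra.
From mathcomp Require Import all_classical all_reals all_analysis.
Set Implicit Arguments. Unset Strict Implicit. Unset Printing Implicit Defensive.
Import Order.TTheory GRing.Theory Num.Theory.
Local Open Scope classical_set_scope.
Local Open Scope ring_scope.

Section defs.
Context {R : realType}.

(** Gaussian expectation on R^n: E[f(m + s Z)], Z ~ N(0, I_n), computed as
    the iterated integral over the n independent coordinates, each
    distributed as the 1-d normal law N(m_i, s^2) (normal_prob m_i s). *)
Fixpoint gauss_int (s : R) (n : nat) :
    n.-tuple R -> (n.-tuple R -> \bar R) -> \bar R :=
  match n with
  | 0 => fun _ f => f [tuple]
  | n'.+1 => fun m f =>
      (\int[normal_prob (thead m) s]_y
         gauss_int s (behead_tuple m) (fun t => f (cons_tuple y t)))%E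
  end.

Fixpoint gauss_int_blocks (s : R) (d n : nat) :
    n.-tuple (d.-tuple R) -> (n.-tuple (d.-tuple R) -> \bar R) -> \bar R :=
  match n with
  | 0 => fun _ f => f [tuple]
  | n'.+1 => fun m f =>
      gauss_int s (thead m) (fun y =>
         gauss_int_blocks s (behead_tuple m) (fun t => f (cons_tuple y t)))
  end.

(** Observation chunks o = (x_{1:tau}, u_{1:tau-1}),
    x_k in R^dx, u_k in R^du. *)
Definition obs (dx du tau : nat) : Type :=
  (tau.-tuple (dx.-tuple R) * (tau.-1).-tuple (du.-tuple R))%type.

(** Expectation of f(o~) where o~ ~ N(o, s^2 I) on the observation space
    (all coordinates independent with variance s^2). *)
Definition gauss_int_obs (s : R) (dx du tau : nat) (o : obs dx du tau)
    (f : obs dx du tau -> \bar R) : \bar R :=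
  gauss_int_blocks s o.1 (fun x => gauss_int_blocks s o.2 (fun u => f (x, u))).

Definition enorm (d : nat) (v : d.-tuple R) : R :=
  Num.sqrt (\sum_(i < d) (tnth v i) ^+ 2).

Definition tsub (d : nat) (v w : d.-tuple R) : d.-tuple R :=
  [tuple tnth v i - tnth w i | i < d].

Definition d_traj (dx du tau : nat) (o o' : obs dx du tau) : R :=
  Num.max (\big[Num.max/0]_(k < tau) enorm (tsub (tnth o.1 k) (tnth o'.1 k)))
          (\big[Num.max/0]_(k < tau.-1) enorm (tsub (tnth o.2 k) (tnth o'.2 k))).

Definition TV (d : measure_display) (A : measurableType d)
    (P Q : set A -> \bar R) : \bar R :=
  ereal_sup [set `|(P B - Q B)%E|%E | B in [set B | measurable B]].

End defs.

(** The smoothed policy: pi_sigma(o) is the law of a ~ pi(o~), o~ ~ N(o, sigma^2 I),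
    i.e. B |-> E_{o~}[pi(o~)(B)]. *)
Definition smoothed {R : realType} (dx du tau : nat) (d : measure_display)
    (A : measurableType d) (pi : R.-pker (@obs R dx du tau) ~> A) (sigma : R)
    (o : obs dx du tau) : set A -> \bar R :=
  fun B => gauss_int_obs sigma o (fun ot => pi ot B).

From Pilot Require Import Defs.
From HB Require Import structures.
From mathcomp Require Import all_boot all_order all_algebra.
From mathcomp Require Import all_classical all_reals all_analysis.
From mathcomp Require Import measurable_realfun ring lra.
Import Order.TTheory GRing.Theory Num.Theory.
Local Open Scope classical_set_scope.
Local Open Scope ring_scope.

(* If two averaging functionals E, E' have densities L = u^2 and L' = v^2 with
   respect to a common E0, then for 0 <= f <= 1 the AM-GM bound
   |u^2 - v^2| <= (t (u - v)^2 + (u + v)^2 / t) / 2 (t >= 1), integrated and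
   optimised in t, gives E f - E' f <= sqrt (1 - BC^2) with BC = E0 (u v).
   For N(m, s^2) and N(m', s^2) the likelihood ratios against N((m + m')/2, s^2)
   have the constant product exp (- (m - m')^2 / (4 s^2)); constant products
   multiply under iterated integration, so the Gaussian averages around two
   observation chunks o, o' satisfy BC^2 = exp (- |o - o'|^2 / (4 sigma^2)).
   Finally 1 - exp (- x) <= x and |o - o'|^2 <= (2 tau - 1) d_traj (o, o')^2,
   as o consists of tau state blocks and tau - 1 input blocks; taking
   f = pi (.) B bounds the total variation. *)

Set Implicit Arguments. Unset Strict Implicit. Unset Printing Implicit Defensive.

Section expectation.
Context {R : realType}.
Local Open Scope ereal_scope.

Definition nonneg_mfun d (T : measurableType d) (f : T -> \bar R) : Prop :=
  measurable_fun setT f /\ forall x, 0 <= f x.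

Lemma nonneg_mfun_cst d (T : measurableType d) (c : R) :
  (0 <= c)%R -> nonneg_mfun (fun _ : T => c%:E).
Proof. by split=> // x; rewrite lee_fin. Qed.

Lemma nonneg_mfun_EFin d (T : measurableType d) (L : T -> R) :
  measurable_fun setT L -> (forall t, 0 <= L t)%R -> nonneg_mfun (EFin \o L).
Proof. by move=> mL L0; split=> //; exact/measurable_EFinP. Qed.

Lemma nonneg_mfunD d (T : measurableType d) (f g : T -> \bar R) :
  nonneg_mfun f -> nonneg_mfun g -> nonneg_mfun (fun x => f x + g x).
Proof.
by move=> [mf f0] [mg g0]; split=> [|x]; [exact: emeasurable_funD|exact: adde_ge0].
Qed.

Lemma nonneg_mfunM d (T : measurableType d) (f g : T -> \bar R) :
  nonneg_mfun f -> nonneg_mfun g -> nonneg_mfun (fun x => f x * g x).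
Proof.
by move=> [mf f0] [mg g0]; split=> [|x]; [exact: emeasurable_funM|exact: mule_ge0].
Qed.

Lemma nonneg_mfun_comp d1 d (T1 : measurableType d1) (T : measurableType d)
    (c : T1 -> T) (f : T -> \bar R) :
  measurable_fun setT c -> nonneg_mfun f -> nonneg_mfun (f \o c).
Proof.
by move=> mc [mf f0]; split=> [|x]; [exact: (measurableT_comp mf mc)|exact: f0].
Qed.

(* The Gaussian averages of [Defs] are iterated integrals rather than integrals
   against a product measure, so we work with the averaging functionals
   themselves; [measurable_expect] is what allows them to be iterated. *)
Record is_expectation d (T : measurableType d) (E : (T -> \bar R) -> \bar R) :
    Prop := {
  expect_ge0 : forall f, nonneg_mfun f -> 0 <= E f;
  expectD : forall f g, nonneg_mfun f -> nonneg_mfun g ->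
    E (fun x => f x + g x) = E f + E g;
  expectZ : forall (c : R) f, (0 <= c)%R -> nonneg_mfun f ->
    E (fun x => c%:E * f x) = c%:E * E f;
  le_expect : forall f g, nonneg_mfun f -> nonneg_mfun g ->
    (forall x, f x <= g x) -> E f <= E g;
  expect1 : E (fun _ => 1) = 1;
  measurable_expect : forall d' (T' : measurableType d') (F : T' * T -> \bar R),
    nonneg_mfun F -> measurable_fun setT (fun x => E (fun y => F (x, y))) }.

Lemma expect_fin_num d (T : measurableType d) E (f : T -> \bar R) :
  is_expectation E -> nonneg_mfun f -> (forall x, f x <= 1) ->
  E f \is a fin_num.
Proof.
move=> EE f01 f1; rewrite ge0_fin_numE ?(expect_ge0 EE) //.
apply: (le_lt_trans _ (ltry 1%R)); rewrite -(expect1 EE).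
by apply: (le_expect EE) => //; exact: nonneg_mfun_cst.
Qed.

Lemma expect_cst d (T : measurableType d) E (c : R) : is_expectation E ->
  (0 <= c)%R -> E (fun _ : T => c%:E) = c%:E.
Proof.
move=> EE c0; rewrite -[RHS]mule1 -(expect1 EE) -(expectZ EE c0) //.
by congr E; apply/funext => x; rewrite mule1.
Qed.

Lemma is_expectation_eval d (T : measurableType d) (a : T) :
  is_expectation (fun f : T -> \bar R => f a).
Proof.
split=> //; first by move=> f [].
by move=> d' T' F [mF _]; exact: measurable_fun_pair1.
Qed.

Section composition.
Context d1 d2 d (T1 : measurableType d1) (T2 : measurableType d2)
  (T : measurableType d) (c : T1 * T2 -> T).
Hypothesis mc : measurable_fun setT c.

Definition expect_comp (E1 : (T1 -> \bar R) -> \bar R)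
    (E2 : (T2 -> \bar R) -> \bar R) (f : T -> \bar R) :=
  E1 (fun x => E2 (fun y => f (c (x, y)))).

Lemma nonneg_mfun_section (f : T -> \bar R) x :
  nonneg_mfun f -> nonneg_mfun (fun y => f (c (x, y))).
Proof.
by apply: (nonneg_mfun_comp (c := fun y => c (x, y))); exact: measurableT_comp.
Qed.

Lemma nonneg_mfun_expect_section E2 (f : T -> \bar R) :
  is_expectation E2 -> nonneg_mfun f ->
  nonneg_mfun (fun x => E2 (fun y => f (c (x, y)))).
Proof.
move=> EE2 f0; split=> [|x]; last exact/(expect_ge0 EE2)/nonneg_mfun_section.
by apply: (measurable_expect EE2 (F := f \o c)); exact: nonneg_mfun_comp.
Qed.

Lemma is_expectation_comp E1 E2 :
  is_expectation E1 -> is_expectation E2 -> is_expectation (expect_comp E1 E2).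
Proof.
move=> EE1 EE2; have outer := nonneg_mfun_expect_section EE2.
have sec := nonneg_mfun_section.
rewrite /expect_comp; split.
- by move=> f f0; apply: (expect_ge0 EE1); exact: outer.
- move=> f g f0 g0; rewrite -(expectD EE1); try exact: outer.
  by congr E1; apply/funext => x; rewrite (expectD EE2) //; exact: sec.
- move=> a f a0 f0; rewrite -(expectZ EE1) //; last exact: outer.
  by congr E1; apply/funext => x; rewrite (expectZ EE2) //; exact: sec.
- move=> f g f0 g0 fg; apply: (le_expect EE1); try exact: outer.
  by move=> x; apply: (le_expect EE2) => //; exact: sec.
- rewrite (_ : (fun x => E2 _) = fun _ => 1) ?(expect1 EE1) //.
  by apply/funext => x; exact: (expect1 EE2).
- move=> d' T' F F0.
  pose G (p : T' * T1) := E2 (fun y => F (p.1, c (p.2, y))).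
  apply: (measurable_expect EE1 (F := G)); split; last first.
    move=> p; apply: (expect_ge0 EE2).
    apply: (nonneg_mfun_comp (c := fun y => (p.1, c (p.2, y)))) F0.
    by apply: measurable_fun_pair => //; exact: measurableT_comp.
  pose c' (q : (T' * T1) * T2) := (q.1.1, c (q.1.2, q.2)).
  apply: (measurable_expect EE2 (F := F \o c')).
  apply: (nonneg_mfun_comp (c := c')) F0.
  apply: measurable_fun_pair; first by apply: measurableT_comp.
  apply: measurableT_comp => //; apply: measurable_fun_pair => //.
  exact: measurableT_comp.
Qed.

End composition.

Definition has_density d (T : measurableType d) (E E0 : (T -> \bar R) -> \bar R)
    (L : T -> R) :=
  [/\ measurable_fun setT L, (forall t, 0 <= L t)%R &
      forall f, nonneg_mfun f -> E f = E0 (fun t => f t * (L t)%:E)].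

Lemma has_density_expect1 d (T : measurableType d) E E0 (L : T -> R) :
  is_expectation E -> has_density E E0 L -> E0 (fun t => (L t)%:E) = 1.
Proof.
move=> EE [_ _ dE]; rewrite -(expect1 EE) dE; last exact: nonneg_mfun_cst.
by congr E0; apply/funext => t /=; rewrite mul1e.
Qed.

(* With [L L' = K], the Bhattacharyya coefficient [E0 (sqrt (L L'))] of [E]
   and [E'] is [sqrt K]. *)
Definition const_density_product d (T : measurableType d)
    (E E' : (T -> \bar R) -> \bar R) (K : R) :=
  [/\ is_expectation E, is_expectation E' &
      exists E0 L L', [/\ is_expectation E0, has_density E E0 L,
                          has_density E' E0 L' & forall t, (L t * L' t = K)%R]].

Lemma const_density_productC d (T : measurableType d) E E' (K : R) :
  @const_density_product d T E E' K -> const_density_product E' E K.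
Proof.
move=> [EE EE' [E0 [L [L' [EE0 dL dL' LL']]]]]; split=> //.
by exists E0, L', L; split=> // t; rewrite mulrC.
Qed.

Lemma const_density_product_eval d (T : measurableType d) (a : T) :
  const_density_product (fun f : T -> \bar R => f a) (fun f => f a) 1%R.
Proof.
have Ea := is_expectation_eval a; split=> //.
exists (fun f => f a), (fun _ => 1%R), (fun _ => 1%R).
by split=> //; [split=> // f _; rewrite mule1 ..| move=> t; rewrite mulr1].
Qed.

Section composition_density.
Context d1 d2 d (T1 : measurableType d1) (T2 : measurableType d2)
  (T : measurableType d) (c : T1 * T2 -> T) (p1 : T -> T1) (p2 : T -> T2).
Hypotheses (mc : measurable_fun setT c) (mp1 : measurable_fun setT p1)
  (mp2 : measurable_fun setT p2).
Hypotheses (cK1 : forall x y, p1 (c (x, y)) = x)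
  (cK2 : forall x y, p2 (c (x, y)) = y).

Lemma has_density_comp E1 E10 L1 E2 E20 L2 :
  is_expectation E20 -> has_density E1 E10 L1 -> has_density E2 E20 L2 ->
  has_density (expect_comp c E1 E2) (expect_comp c E10 E20)
    (fun t => L1 (p1 t) * L2 (p2 t))%R.
Proof.
move=> EE20 [mL1 L10 dE1] [mL2 L20 dE2]; split.
- by apply: measurable_funM; exact: measurableT_comp.
- by move=> t; apply: mulr_ge0.
move=> f f0; rewrite /expect_comp.
have fL2 : nonneg_mfun (fun p : T1 * T2 => f (c p) * (L2 p.2)%:E).
  apply: nonneg_mfunM; first exact: nonneg_mfun_comp.
  apply: (nonneg_mfun_EFin (L := L2 \o snd)) => // [|t]; last exact: L20.
  exact: measurableT_comp.
have fL2x x := nonneg_mfun_comp (pair1_measurable x) fL2.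
transitivity (E1 (fun x => E20 (fun y => f (c (x, y)) * (L2 y)%:E))).
  by congr E1; apply/funext => x; rewrite dE2 //; exact: (nonneg_mfun_section mc).
rewrite dE1; last first.
  split=> [|x]; first exact: (measurable_expect EE20 fL2).
  exact: (expect_ge0 EE20 (fL2x x)).
congr E10; apply/funext => x; rewrite muleC -(expectZ EE20) //; last exact: fL2x.
by congr E20; apply/funext => y; rewrite cK1 cK2 EFinM muleCA muleA.
Qed.

Lemma const_density_product_comp E1 E1' K1 E2 E2' K2 :
  const_density_product E1 E1' K1 -> const_density_product E2 E2' K2 ->
  const_density_product (expect_comp c E1 E2) (expect_comp c E1' E2') (K1 * K2)%R.
Proof.
move=> [EE1 EE1' [E10 [L1 [L1' [EE10 dL1 dL1' LL1]]]]].
move=> [EE2 EE2' [E20 [L2 [L2' [EE20 dL2 dL2' LL2]]]]].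
split; try exact: is_expectation_comp.
exists (expect_comp c E10 E20), (fun t => L1 (p1 t) * L2 (p2 t))%R,
  (fun t => L1' (p1 t) * L2' (p2 t))%R; split.
- exact: is_expectation_comp.
- exact: has_density_comp.
- exact: has_density_comp.
- by move=> t; rewrite -(LL1 (p1 t)) -(LL2 (p2 t)); ring.
Qed.

End composition_density.

End expectation.

Section amgm.
Context {R : realType}.

(* [r (L - L') <= ((L - L') + |u^2 - v^2|) / 2] for [u^2 = L], [v^2 = L'], and
   [|u^2 - v^2| <= (t (u - v)^2 + (u + v)^2 / t) / 2] by AM-GM; the terms are
   arranged so that both sides are nonnegative combinations of [r L], [r L'],
   [L], [L'] and [1], since [E0] is only additive on nonnegative functions. *)
Lemma amgm_density_le (r L L' k t : R) : 0 <= r <= 1 -> 0 <= L -> 0 <= L' ->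
  0 <= k -> L * L' = k ^+ 2 -> 1 <= t ->
  r * L + L' / 2 + k * (t - t^-1) / 2 <=
  r * L' + (t + t^-1) / 4 * L + (t + t^-1) / 4 * L' + L / 2.
Proof.
move=> /andP[r0 r1] L0 L'0 k0 LL t1.
set u := Num.sqrt L; set v := Num.sqrt L'.
have uL : L = u ^+ 2 by rewrite sqr_sqrtr.
have vL' : L' = v ^+ 2 by rewrite sqr_sqrtr.
have uvk : k = u * v by rewrite -sqrtrM // LL sqrtr_sqr ger0_norm.
have t0 : t != 0 by rewrite gt_eqF //; lra.
rewrite -subr_ge0.
have -> : r * L' + (t + t^-1) / 4 * L + (t + t^-1) / 4 * L' + L / 2 -
    (r * L + L' / 2 + k * (t - t^-1) / 2) =
  ((1 - r) * (t * (u - v) + (u + v)) ^+ 2 + r * (t * (u - v) - (u + v)) ^+ 2)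
  / (4 * t).
  by rewrite uL vL' uvk; field.
apply: divr_ge0; last lra.
by apply: addr_ge0; apply: mulr_ge0; rewrite ?sqr_ge0 ?subr_ge0.
Qed.

(* [sqrt (1 - k^2)] is the infimum of the family, attained at
   [t = (1 + k) / sqrt (1 - k^2)] when [k < 1]. *)
Lemma le_inf_amgm_family (x k : R) : 0 <= k <= 1 ->
  (forall t, 1 <= t -> x <= (t * (1 - k) + (1 + k) / t) / 2) ->
  x <= Num.sqrt (1 - k ^+ 2).
Proof.
move=> /andP[k0 k1] xle.
have [k_lt1|k_ge1] := ltP k 1.
  set s := Num.sqrt (1 - k ^+ 2).
  have s2 : s ^+ 2 = 1 - k ^+ 2 by rewrite sqr_sqrtr // subr_ge0 expr_le1.
  have s0 : 0 < s by rewrite sqrtr_gt0 subr_gt0 expr_lt1.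
  have t1 : 1 <= (1 + k) / s by rewrite ler_pdivlMr // mul1r; nra.
  suff <- : ((1 + k) / s * (1 - k) + (1 + k) / ((1 + k) / s)) / 2 = s.
    exact: xle.
  have sn : s != 0 by rewrite gt_eqF.
  have kn : 1 + k != 0 by rewrite gt_eqF //; lra.
  have -> : (1 + k) / s * (1 - k) = (1 - k ^+ 2) / s by field.
  by rewrite -s2; field; rewrite sn kn.
have k1e : k = 1 by apply/eqP; rewrite eq_le k1 k_ge1.
subst k.
rewrite expr1n subrr sqrtr0 leNgt; apply/negP => x0.
have t1 : 1 <= 1 + x^-1 by rewrite lerDl invr_ge0 ltW.
have := xle _ t1; rewrite subrr mulr0 add0r.
have -> : (1 + 1) / (1 + x^-1) / 2 = x / (x + 1).
  have xn : x != 0 by rewrite gt_eqF.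
  have x1 : x + 1 != 0 by rewrite gt_eqF //; lra.
  by field; rewrite xn x1.
rewrite ler_pdivlMr; [nra|lra].
Qed.

End amgm.

Local Ltac nonneg_mfun_tac :=
  by repeat (apply: nonneg_mfunD || apply: nonneg_mfunM || apply: nonneg_mfun_cst).

Section const_density_product_bound.
Context {R : realType} d (T : measurableType d).
Variables (E E' : (T -> \bar R) -> \bar R) (K : R) (f : T -> \bar R).
Hypotheses (EE' : const_density_product E E' K) (K0 : 0 <= K) (f0 : nonneg_mfun f)
  (f1 : forall x, (f x <= 1)%E).
Local Notation k := (Num.sqrt K).

Lemma const_density_product_amgm_le t : 1 <= t ->
  fine (E f) - fine (E' f) <= (t * (1 - k) + (1 + k) / t) / 2.
Proof.
move: EE' => [EE EE'' [E0 [L [L' [EE0 dL dL' LL']]]]] t1.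
have [[mL L0 dE] [mL' L'0 dE']] := (dL, dL').
have k0 : 0 <= k := sqrtr_ge0 K.
have kK : k ^+ 2 = K by rewrite sqr_sqrtr.
have t0 : t != 0 by rewrite gt_eqF //; lra.
have ti0 : 0 <= t^-1 by rewrite invr_ge0; lra.
have ti1 : t^-1 <= 1 by rewrite invf_le1 //; lra.
pose a := (t + t^-1) / 4; pose c := k * (t - t^-1) / 2.
have a0 : 0 <= a by apply: divr_ge0; lra.
have c0 : 0 <= c by apply: divr_ge0 => //; apply: mulr_ge0 => //; lra.
have h0 : 0 <= 2^-1 :> R by rewrite invr_ge0.
have nL := nonneg_mfun_EFin mL L0; have nL' := nonneg_mfun_EFin mL' L'0.
have fL := nonneg_mfunM f0 nL; have fL' := nonneg_mfunM f0 nL'.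
pose F x := (f x * (L x)%:E + (2^-1)%:E * (L' x)%:E + c%:E)%E.
pose G x := (f x * (L' x)%:E + a%:E * (L x)%:E + a%:E * (L' x)%:E
             + (2^-1)%:E * (L x)%:E)%E.
have FG x : (F x <= G x)%E.
  have fx0 : (0 <= f x)%E by case: f0.
  have fxE : f x = (fine (f x))%:E.
    by rewrite fineK // ge0_fin_numE // (le_lt_trans (f1 x)) ?ltry.
  have r01 : 0 <= fine (f x) <= 1 by rewrite -!lee_fin -fxE fx0 f1.
  rewrite /F /G fxE -!EFinM -!EFinD lee_fin.
  have := amgm_density_le r01 (L0 x) (L'0 x) k0 (etrans (LL' x) (esym kK)) t1.
  rewrite /a /c; lra.
have : (E0 F <= E0 G)%E by apply: (le_expect EE0) FG; nonneg_mfun_tac.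
rewrite /F /G !(expectD EE0) ?(expectZ EE0) ?(expect_cst EE0) -?dE -?dE'.
all: try nonneg_mfun_tac.
rewrite !(has_density_expect1 EE dL) !(has_density_expect1 EE'' dL').
rewrite -(fineK (expect_fin_num EE f0 f1)) -(fineK (expect_fin_num EE'' f0 f1)).
rewrite !mule1 -!EFinD lee_fin /=.
have -> : (t * (1 - k) + (1 + k) / t) / 2 = a + a - c by rewrite /a /c; field.
lra.
Qed.

Lemma const_density_product_fine_le : K <= 1 ->
  fine (E f) - fine (E' f) <= Num.sqrt (1 - K).
Proof.
move=> K1; rewrite -[in X in 1 - X](sqr_sqrtr K0).
apply: le_inf_amgm_family; last exact: const_density_product_amgm_le.
by rewrite sqrtr_ge0 -sqrtr1 ler_sqrt.
Qed.

End const_density_product_bound.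

Lemma const_density_product_abs_le {R : realType} d (T : measurableType d)
    (E E' : (T -> \bar R) -> \bar R) (K : R) (f : T -> \bar R) :
  const_density_product E E' K -> 0 <= K <= 1 -> nonneg_mfun f ->
  (forall x, f x <= 1)%E -> (`|E f - E' f| <= (Num.sqrt (1 - K))%:E)%E.
Proof.
move=> EE' /andP[K0 K1] f0 f1; have [EE EE'' _] := EE'.
rewrite -(fineK (expect_fin_num EE f0 f1)) -(fineK (expect_fin_num EE'' f0 f1)).
rewrite -EFinB abse_EFin lee_fin ler_norml.
rewrite const_density_product_fine_le // andbT lerNl opprB.
exact: const_density_product_fine_le (const_density_productC EE') K0 f0 f1 K1.
Qed.

Section integral_density.
Context d (T : measurableType d) (R : realType).
Local Open Scope ereal_scope.
Variables (mu nu : {measure set T -> \bar R}) (g : T -> R).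
Hypotheses (mg : measurable_fun setT g) (g0 : forall x, (0 <= g x)%R).
Hypothesis hnu : forall A, measurable A -> nu A = \int[mu]_(x in A) (g x)%:E.

Let density_indic E : measurable E ->
  \int[nu]_x (\1_E x)%:E = \int[mu]_x ((\1_E x)%:E * (g x)%:E).
Proof.
move=> mE; rewrite integral_indic // setIT hnu // integral_mkcond.
apply: eq_integral => x _; rewrite patchE indicE.
by case: ifPn => _; rewrite ?mul1e ?mul0e.
Qed.

Import HBNNSimple.

Let density_nnsfun (h : {nnsfun T >-> R}) :
  \int[nu]_x (h x)%:E = \int[mu]_x ((h x)%:E * (g x)%:E).
Proof.
under [LHS]eq_integral do rewrite fimfunE -fsumEFin//.
rewrite [LHS]ge0_integral_fsum//; last 2 first.
  - by move=> r; exact/measurable_EFinP/measurableT_comp.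
  - by move=> n x _; rewrite EFinM nnfun_muleindic_ge0.
under [RHS]eq_integral.
  move=> x _; rewrite fimfunE -fsumEFin// ge0_mule_fsuml; last first.
    by move=> r; rewrite EFinM nnfun_muleindic_ge0.
  over.
rewrite [RHS]ge0_integral_fsum//; last 2 first.
  - move=> r; apply/emeasurable_funM; last exact/measurable_EFinP.
    by apply/measurable_EFinP; do 2 apply/measurableT_comp => //.
  - move=> n x _; rewrite mule_ge0//; last by rewrite lee_fin.
    by rewrite EFinM nnfun_muleindic_ge0.
apply: eq_fsbigr => r; rewrite inE => -[x0 _ <-].
rewrite integralZl_indic_nnsfun//.
under [RHS]eq_integral do rewrite EFinM -muleA.
rewrite ge0_integralZl//; last 3 first.
  - apply/emeasurable_funM; last exact/measurable_EFinP.
    apply/measurable_EFinP; apply: measurable_indic.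
    by rewrite -[X in measurable X]setTI; apply: measurable_funP.
  - by move=> x _; rewrite mule_ge0// lee_fin.
  - by rewrite lee_fin.
rewrite density_indic //.
Qed.

Lemma ge0_integral_density (f : T -> \bar R) : measurable_fun setT f ->
  (forall x, 0 <= f x) ->
  \int[nu]_x f x = \int[mu]_x (f x * (g x)%:E).
Proof.
move=> mf f0.
pose f_ := nnsfun_approx measurableT mf.
transitivity (lim (\int[nu]_x (f_ n x)%:E @[n --> \oo])%E).
  rewrite -monotone_convergence//=.
  - apply: eq_integral => ? /[!inE] xD; apply/esym/cvg_lim => //=.
    exact: cvg_nnsfun_approx.
  - by move=> n; exact/measurable_EFinP/measurable_funTS.
  - by move=> n ? _; rewrite lee_fin.
  - by move=> ? _ ? ? mn; rewrite lee_fin; exact/lefP/nd_nnsfun_approx.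
transitivity (lim (\int[mu]_x ((f_ n x)%:E * (g x)%:E) @[n --> \oo])%E).
  by apply: congr_lim; apply/funext => n /=; exact: density_nnsfun.
rewrite -monotone_convergence//=.
- apply: eq_integral => x _; apply/cvg_lim => //; apply: cvgeZr => //.
  exact: cvg_nnsfun_approx.
- move=> n; apply/emeasurable_funM; apply/measurable_EFinP => //.
- by move=> n x _; rewrite mule_ge0 // lee_fin.
- move=> x _ a b ab; rewrite lee_wpmul2r ?lee_fin //.
  exact/lefP/nd_nnsfun_approx.
Qed.

End integral_density.

Lemma big_tnth2_recl (T S : Type) (idx : S) (op : Monoid.law idx) n
    (F : T -> T -> S) (m m' : n.+1.-tuple T) :
  \big[op/idx]_(i < n.+1) F (tnth m i) (tnth m' i) =
  op (F (thead m) (thead m'))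
     (\big[op/idx]_(i < n) F (tnth (behead_tuple m) i) (tnth (behead_tuple m') i)).
Proof.
rewrite big_ord_recl; congr (op _ _); apply: eq_bigr => i _; rewrite !tnth_behead.
by congr (F (tnth m _) (tnth m' _)); apply/val_inj; rewrite /= inordK // ltnS.
Qed.

Section tuple_expect.
Context {R : realType} dY (X : Type) (Y : measurableType dY).
Variable E : X -> (Y -> \bar R) -> \bar R.

Fixpoint tuple_expect n : n.-tuple X -> (n.-tuple Y -> \bar R) -> \bar R :=
  match n with
  | 0 => fun _ f => f [tuple]
  | n'.+1 => fun m f =>
      E (thead m) (fun y =>
        tuple_expect (behead_tuple m) (fun t => f (cons_tuple y t)))
  end.

Lemma const_density_product_tuple (K : X -> X -> R) :
  (forall a a', const_density_product (E a) (E a') (K a a')) ->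
  forall n (m m' : n.-tuple X), const_density_product
    (tuple_expect m) (tuple_expect m') (\prod_(i < n) K (tnth m i) (tnth m' i)).
Proof.
move=> EK; elim=> [|n IHn] m m'.
  by rewrite big_ord0; exact: const_density_product_eval.
rewrite big_tnth2_recl.
apply: (const_density_product_comp (T1 := Y) (T2 := n.-tuple Y)
  (T := n.+1.-tuple Y) (c := fun p => cons_tuple p.1 p.2)
  (p1 := @thead n Y) (p2 := @behead_tuple n.+1 Y)) (EK _ _) (IHn _ _).
- exact: (measurable_cons measurable_fst measurable_snd).
- exact: measurable_tnth.
- exact: measurable_behead.
- by move=> x y; rewrite theadE.
- by move=> x y; apply/val_inj.
Qed.

End tuple_expect.

Section gaussian.
Context {R : realType}.

(* The likelihood ratio of N(mid + del, s^2) with respect to N(mid, s^2). *)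
Definition normal_shift_density (mid del s y : R) : R :=
  expR (((y - mid) * del - del ^+ 2 / 2) / s ^+ 2).

(* [normal_prob] lives on [measurableTypeR R], whose display differs from that
   of the canonical sigma-algebra of [R] used for tuples in [Defs]; the
   functional is therefore typed on [R]. *)
Lemma is_expectation_normal_prob (m s : R) :
  is_expectation (fun f : R -> \bar R => (\int[normal_prob m s]_y f y)%E).
Proof.
split.
- by move=> f [_ f0]; apply: integral_ge0.
- by move=> f g [mf f0] [mg g0]; rewrite ge0_integralD.
- by move=> c f c0 [mf f0]; rewrite ge0_integralZl // lee_fin.
- by move=> f g [mf f0] [mg g0] fg; apply: ge0_le_integral.
- by rewrite integral_cst // mul1e; exact: probability_setT.
- move=> d' T' F [mF F0].
  exact: (@measurable_fun_fubini_tonelli_F _ _ T' (measurableTypeR R) _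
    (normal_prob m s) F mF F0).
Qed.

Lemma measurable_normal_shift_density mid del s :
  measurable_fun setT (normal_shift_density mid del s).
Proof.
apply: measurableT_comp => //; apply: measurable_funM => //.
apply: measurable_funB => //; apply: measurable_funM => //.
exact: measurable_funB.
Qed.

Lemma has_density_normal (m mid s : R) : s != 0 ->
  has_density (fun f : R -> \bar R => (\int[normal_prob m s]_y f y)%E)
    (fun f => (\int[normal_prob mid s]_y f y)%E)
    (normal_shift_density mid (m - mid) s).
Proof.
move=> s0; split=> [||f [mf f0]]; first exact: measurable_normal_shift_density.
  by move=> y; exact: expR_ge0.
rewrite (@ge0_integral_density _ _ _ lebesgue_measure (normal_prob m s)
  (normal_pdf m s)) //; last 2 first.
- exact: measurable_normal_pdf.
- by move=> y; exact: normal_pdf_ge0.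
rewrite (@ge0_integral_density _ _ _ lebesgue_measure (normal_prob mid s)
  (normal_pdf mid s)) //; last 4 first.
- exact: measurable_normal_pdf.
- by move=> y; exact: normal_pdf_ge0.
- by apply: emeasurable_funM => //; apply/measurable_EFinP;
    exact: measurable_normal_shift_density.
- by move=> y; rewrite mule_ge0 // lee_fin expR_ge0.
apply: eq_integral => y _; rewrite -muleA -EFinM; congr (_ * _%:E)%E.
rewrite !normal_pdfE // /normal_fun /normal_shift_density.
rewrite mulrCA -expRD; congr (_ * expR _).
by rewrite -mulr_natr; field; rewrite s0.
Qed.

Lemma const_density_product_normal (m m' s : R) : s != 0 ->
  const_density_product (fun f : R -> \bar R => (\int[normal_prob m s]_y f y)%E)
    (fun f => (\int[normal_prob m' s]_y f y)%E)
    (expR (- (m - m') ^+ 2 / (4 * s ^+ 2))).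
Proof.
move=> s0; split; try exact: is_expectation_normal_prob.
pose mid := (m + m') / 2.
exists (fun f : R -> \bar R => (\int[normal_prob mid s]_y f y)%E),
  (normal_shift_density mid (m - mid) s), (normal_shift_density mid (m' - mid) s).
split; [exact: is_expectation_normal_prob|exact: has_density_normal..|].
move=> y; rewrite /normal_shift_density -expRD /mid; congr expR.
by field; rewrite s0.
Qed.

Lemma gauss_intE s n (m : n.-tuple R) :
  gauss_int s m =
  tuple_expect (fun a (f : R -> \bar R) => (\int[normal_prob a s]_y f y)%E) m.
Proof.
apply/funext; elim: n m => [|n IHn] m f //=.
by congr integral; apply/funext => y; rewrite IHn.
Qed.

Lemma gauss_int_blocksE s d n (m : n.-tuple (d.-tuple R)) :
  gauss_int_blocks s m = tuple_expect (fun a => gauss_int s a) m.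
Proof.
apply/funext; elim: n m => [|n IHn] m f //=.
by congr gauss_int; apply/funext => y; rewrite IHn.
Qed.

Lemma sqr_enorm_tsub n (v w : n.-tuple R) :
  enorm (tsub v w) ^+ 2 = \sum_(i < n) (tnth v i - tnth w i) ^+ 2.
Proof.
rewrite sqr_sqrtr; last by apply: sumr_ge0 => i _; exact: sqr_ge0.
by apply: eq_bigr => i _; rewrite tnth_mktuple.
Qed.

Lemma prod_expRN_div I (r : seq I) (x : I -> R) (c : R) :
  \prod_(i <- r) expR (- x i / c) = expR (- (\sum_(i <- r) x i) / c).
Proof.
rewrite -expR_sum mulNr mulr_suml -sumrN.
by congr expR; apply: eq_bigr => i _; rewrite mulNr.
Qed.

Lemma const_density_product_gauss_int s n (m m' : n.-tuple R) : s != 0 ->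
  const_density_product (gauss_int s m) (gauss_int s m')
    (expR (- enorm (tsub m m') ^+ 2 / (4 * s ^+ 2))).
Proof.
move=> s0; rewrite !gauss_intE sqr_enorm_tsub -prod_expRN_div.
exact: const_density_product_tuple
  (fun a a' => const_density_product_normal a a' s0) n m m'.
Qed.

Definition blocks_sqdist d n (m m' : n.-tuple (d.-tuple R)) : R :=
  \sum_(k < n) enorm (tsub (tnth m k) (tnth m' k)) ^+ 2.

Lemma const_density_product_gauss_int_blocks s d n
    (m m' : n.-tuple (d.-tuple R)) : s != 0 ->
  const_density_product (gauss_int_blocks s m) (gauss_int_blocks s m')
    (expR (- blocks_sqdist m m' / (4 * s ^+ 2))).
Proof.
move=> s0; rewrite !gauss_int_blocksE -prod_expRN_div.
exact: const_density_product_tuple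
  (fun a a' => const_density_product_gauss_int a a' s0) n m m'.
Qed.

Definition obs_sqdist dx du tau (o o' : @obs R dx du tau) : R :=
  blocks_sqdist o.1 o'.1 + blocks_sqdist o.2 o'.2.

Lemma const_density_product_gauss_int_obs s dx du tau
    (o o' : @obs R dx du tau) : s != 0 ->
  const_density_product (gauss_int_obs s o) (gauss_int_obs s o')
    (expR (- obs_sqdist o o' / (4 * s ^+ 2))).
Proof.
move=> s0; rewrite /obs_sqdist opprD mulrDl expRD.
apply: (const_density_product_comp (c := id) (p1 := fst) (p2 := snd)) => //.
- exact: const_density_product_gauss_int_blocks.
- exact: const_density_product_gauss_int_blocks.
Qed.

End gaussian.

Section trajectory_distance.
Context {R : realType}.

Lemma blocks_sqdist_ge0 d n (m m' : n.-tuple (d.-tuple R)) :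
  0 <= blocks_sqdist m m'.
Proof. by apply: sumr_ge0 => k _; exact: sqr_ge0. Qed.

Lemma blocks_sqdist_le d n (m m' : n.-tuple (d.-tuple R)) (r : R) :
  (forall k, enorm (tsub (tnth m k) (tnth m' k)) <= r) ->
  blocks_sqdist m m' <= n%:R * r ^+ 2.
Proof.
move=> le_r; rewrite /blocks_sqdist mulr_natl -[n in _ *+ n]card_ord -sumr_const.
apply: ler_sum => k _; have := le_r k.
have : 0 <= enorm (tsub (tnth m k) (tnth m' k)) := sqrtr_ge0 _.
nra.
Qed.

Lemma d_traj_ge0 dx du tau (o o' : @obs R dx du tau) : 0 <= d_traj o o'.
Proof. by rewrite le_max bigmax_ge_id. Qed.

Lemma obs_sqdist_le_d_traj dx du tau (o o' : @obs R dx du tau) : (0 < tau)%N ->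
  obs_sqdist o o' <= (2 * tau%:R - 1) * d_traj o o' ^+ 2.
Proof.
move=> tau0; have -> : 2 * tau%:R - 1 = tau%:R + (tau.-1)%:R :> R.
  by rewrite -(prednK tau0) /= -natr1; ring.
rewrite mulrDl; apply: lerD; apply: blocks_sqdist_le => k;
  rewrite /d_traj le_max le_bigmax ?orbT //.
Qed.

End trajectory_distance.

Lemma sqrt_1_sub_expRN_le {R : realType} (x : R) : 0 <= x ->
  Num.sqrt (1 - expR (- x)) <= Num.sqrt x.
Proof.
move=> x0; rewrite ler_sqrt //; have := expR_ge1Dx (- x); lra.
Qed.

Lemma sqrt_div_sqr_le {R : realType} (x a y s : R) : 0 <= a -> 0 <= y -> 0 < s ->
  x <= a * y ^+ 2 -> Num.sqrt (x / (4 * s ^+ 2)) <= Num.sqrt a / (2 * s) * y.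
Proof.
move=> a0 y0 s0 xle; have sn : s != 0 := lt0r_neq0 s0.
have rhs0 : 0 <= Num.sqrt a / (2 * s) * y.
  by rewrite mulr_ge0 // divr_ge0 ?sqrtr_ge0 // mulr_ge0 // ltW.
rewrite -[leRHS]ger0_norm // -sqrtr_sqr ler_sqrt ?sqr_ge0 //.
have -> : (Num.sqrt a / (2 * s) * y) ^+ 2 = a * y ^+ 2 / (4 * s ^+ 2).
  by rewrite !exprMn exprVn sqr_sqrtr //; field.
by rewrite ler_wpM2r // invr_ge0 mulr_ge0 // sqr_ge0.
Qed.

Unset Implicit Arguments. Set Strict Implicit.

Theorem lemma1 (R : realType) (dx du tau : nat) (d : measure_display)
    (A : measurableType d) (H : nat)
    (pi : 'I_H -> R.-pker (@obs R dx du tau) ~> A) (sigma : R) :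
  (0 < tau)%N -> 0 < sigma ->
  forall (h : 'I_H) (o o' : obs dx du tau),
    (TV (smoothed (pi h) sigma o) (smoothed (pi h) sigma o') <=
     ((Num.sqrt (2 * tau%:R - 1) / (2 * sigma)) * d_traj o o')%:E)%E.
Proof.
move=> tau0 sigma0 h o o'.
have gauss := const_density_product_gauss_int_obs o o' (lt0r_neq0 sigma0).
have x0 : 0 <= obs_sqdist o o' / (4 * sigma ^+ 2).
  by rewrite divr_ge0 ?addr_ge0 ?blocks_sqdist_ge0 // mulr_ge0 // sqr_ge0.
have K01 : 0 <= expR (- obs_sqdist o o' / (4 * sigma ^+ 2)) <= 1.
  by rewrite expR_ge0 mulNr expR_le1 oppr_le0.
apply: ub_ereal_sup => _ [B mB <-].
apply: le_trans (const_density_product_abs_le gauss K01 _ _) _.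
- by split=> [|ot]; [exact: measurable_kernel|exact: measure_ge0].
- move=> ot; rewrite -(prob_kernel (s := pi h) ot).
  by apply: le_measure; rewrite ?inE.
rewrite lee_fin mulNr; apply: le_trans (sqrt_1_sub_expRN_le x0) _.
apply: sqrt_div_sqr_le; rewrite ?d_traj_ge0 ?obs_sqdist_le_d_traj //.
have : 1 <= tau%:R :> R by rewrite ler1n.
lra.
Qed.
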